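(* Let $R$ be a $*$-ring and $e$ a projection in $R$. If $R$ is a generalized weakly Rickart $*$-ring, then so is $eRe$.
   Context: A $*$-ring is an associative ring $R$ with an involution $x\mapsto x^*$ (additive, $(xy)^*=y^*x^*$, $x^{**}=x$). A projection is an element $e$ with $e=e^*=e^2$; $eRe=\{exe: x\in R\}$ is a $*$-subring. In a $*$-ring $S$, a projection $f\in S$ is a generalized right projection of $x\in S$ if there exists $n\in\mathbb N$ with $x^nf=x^n$ and, for all $y\in S$, $x^ny=0$ implies $fy=0$. $S$ is a generalized weakly Rickart $*$-ring if every element of $S$ has a generalized right projection in $S$. *)

From mathcomp Require Import all_boot all_algebra.
Set Implicit Arguments. Unset Strict Implicit. Unset Printing Implicit Defensive.
Import GRing.Theory.
Local Open Scope ring_scope.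

(* A (not necessarily unital) associative ring is given by an additive abelian
   group [R : zmodType] together with a multiplication [mul]; a *-ring adds an
   involution [star]. *)
Record is_star_ring (R : zmodType) (mul : R -> R -> R) (star : R -> R) : Prop :=
  StarRing {
    sr_mulA : associative mul;
    sr_mulDl : left_distributive mul +%R;
    sr_mulDr : right_distributive mul +%R;
    sr_starD : forall x y, star (x + y) = star x + star y;
    sr_starM : forall x y, star (mul x y) = mul (star y) (star x);
    sr_starK : forall x, star (star x) = x
  }.

(* positive powers: spow mul x n = x^(n+1) *)
Definition spow (R : Type) (mul : R -> R -> R) (x : R) (n : nat) : R :=
  iter n (mul x) x.

Definition is_projection (R : Type) (mul : R -> R -> R) (star : R -> R) (e : R) : Prop :=
  e = star e /\ e = mul e e.

Definition corner (R : Type) (mul : R -> R -> R) (e : R) : R -> Prop :=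
  fun z => exists x, z = mul (mul e x) e.

(* generalized right projection of x in the *-subring S (a subset of R, with
   the operations of R) : a projection f of S with x^n f = x^n (n >= 1) and
   x^n y = 0 -> f y = 0 for all y in S *)
Definition gen_right_proj (R : zmodType) (mul : R -> R -> R) (star : R -> R)
  (S : R -> Prop) (x f : R) : Prop :=
  S f /\ is_projection mul star f /\
  exists n : nat, mul (spow mul x n) f = spow mul x n /\
    forall y, S y -> mul (spow mul x n) y = 0 -> mul f y = 0.

Definition gen_weakly_Rickart_on (R : zmodType) (mul : R -> R -> R)
  (star : R -> R) (S : R -> Prop) : Prop :=
  forall x, S x -> exists f, gen_right_proj mul star S x f.

Definition gen_weakly_Rickart (R : zmodType) (mul : R -> R -> R)
  (star : R -> R) : Prop :=
  gen_weakly_Rickart_on mul star (fun _ => True).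

From mathcomp Require Import all_boot all_algebra.
Set Implicit Arguments. Unset Strict Implicit. Unset Printing Implicit Defensive.
Import GRing.Theory.
Local Open Scope ring_scope.

(* Let x = exe and let f be a generalized right projection of x in R, with
   exponent n.  Since x^n e = x^n, the element f - ef is annihilated by x^n,
   hence by f, so f = fef.  This makes efe a projection of eRe, and efe is a
   generalized right projection of x in eRe with the same exponent n: for y in
   eRe, x^n y = 0 gives f y = 0, hence efe y = ef y = 0. *)

Section StarRingCorner.

Variables (R : zmodType) (mul : R -> R -> R) (star : R -> R).

Local Notation "x ** y" := (mul x y) (at level 40, left associativity).

Hypothesis mulA : associative mul.
Hypothesis mulDr : right_distributive mul +%R.

Lemma sr_mulr0 x : x ** 0 = 0.
Proof. by apply: (addrI (x ** 0)); rewrite -mulDr !addr0. Qed.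

Lemma sr_mulrBr x a b : x ** (a - b) = x ** a - x ** b.
Proof.
have mulrN : x ** - b = - (x ** b).
  by apply/eqP; rewrite -subr_eq0 opprK -mulDr addNr sr_mulr0.
by rewrite mulDr mulrN.
Qed.

Lemma spow_mulr_id x a : x ** a = x -> forall n, spow mul x n ** a = spow mul x n.
Proof. by move=> xa; elim=> [|n IHn] //=; rewrite -mulA IHn. Qed.

Variable e : R.
Hypothesis e_idem : e = e ** e.

Lemma corner_mull_id z : corner mul e z -> e ** z = z.
Proof. by move=> [a ->]; rewrite !mulA -e_idem. Qed.

Lemma corner_mulr_id z : corner mul e z -> z ** e = z.
Proof. by move=> [a ->]; rewrite -mulA -e_idem. Qed.

Lemma rproj_sandwich_id x f n :
    spow mul x n ** e = spow mul x n ->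
    f = f ** f ->
    spow mul x n ** f = spow mul x n ->
    (forall y, spow mul x n ** y = 0 -> f ** y = 0) ->
  f = f ** e ** f.
Proof.
move=> xne f_idem xnf f_rann.
have : spow mul x n ** (f - e ** f) = 0 by rewrite sr_mulrBr mulA xne xnf subrr.
move=> /f_rann; rewrite sr_mulrBr -f_idem mulA => /eqP.
by rewrite subr_eq0 => /eqP.
Qed.

Hypothesis starM : forall x y, star (x ** y) = star y ** star x.
Hypothesis e_sa : e = star e.

Lemma gen_right_proj_corner x f :
    corner mul e x -> gen_right_proj mul star (fun _ => True) x f ->
  gen_right_proj mul star (corner mul e) x (e ** f ** e).
Proof.
move=> Cx [_ [[f_sa f_idem] [n [xnf f_rann]]]].
have xne := spow_mulr_id (corner_mulr_id Cx) n.
have fef := rproj_sandwich_id xne f_idem xnf (fun y => f_rann y I).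
split; first by exists f.
split; first split.
- by rewrite !starM -e_sa -f_sa mulA.
- by rewrite !mulA -(mulA _ e e) -e_idem -(mulA e f e) -(mulA e _ f) -fef.
exists n; split; first by rewrite !mulA xne xnf xne.
move=> y Cy xny.
by rewrite -mulA (corner_mull_id Cy) -mulA (f_rann y I xny) sr_mulr0.
Qed.

End StarRingCorner.

Theorem mainTheorem12 (R : zmodType) (mul : R -> R -> R) (star : R -> R) (e : R) :
  is_star_ring mul star ->
  is_projection mul star e ->
  gen_weakly_Rickart mul star ->
  gen_weakly_Rickart_on mul star (corner mul e).
Proof.
move=> [mulA _ mulDr _ starM _] [e_sa e_idem] GW x Cx.
have [f f_rproj] := GW x I.
by exists (mul (mul e f) e); exact: gen_right_proj_corner.
Qed.
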